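(* Let $\alpha,\beta,\eta\in\mathbb{C}$. (1)(i) For $TSV(a,b)$ with $(a,b)\neq(1,0)$ and $\alpha\neq0$, a nontrivial extension $0\to M_{\alpha,\beta}\to E\to\mathbb{C}c_\eta\to0$ exists iff $\beta+\eta=0$ and $\alpha=1$. In this case $\dim\mathrm{Ext}(\mathbb{C}c_{-\beta},M_{1,\beta})=1$ and every nontrivial extension is equivalent to $E=\mathbb{C}[\partial]v\oplus\mathbb{C}c_\eta$ with $L_\lambda c_\eta=kv$, $Y_\lambda c_\eta=M_\lambda c_\eta=0$, $\partial c_\eta=\eta c_\eta+kv$ for some $k\neq0$. (1)(ii) For $TSV(1,0)$ and $(\alpha,\gamma)\neq(0,0)$, a nontrivial extension $0\to M_{\alpha,\beta,\gamma}\to E\to\mathbb{C}c_\eta\to0$ exists iff $\beta+\eta=0$ and $(\alpha,\gamma)=(1,0)$. In this case $\dim\mathrm{Ext}(\mathbb{C}c_{-\beta},M_{1,\beta,0})=1$ and every nontrivial extension is equivalent to the one with $L_\lambda c_\eta=kv$, $Y_\lambda c_\eta=M_\lambda c_\eta=0$, $\partial c_\eta=\eta c_\eta+kv$ for some $k\neq0$. (2) For $TSV(c)$ and $\alpha\neq0$, a nontrivial extension $0\to M_{\alpha,\beta}\to E\to\mathbb{C}c_\eta\to0$ exists iff $\beta+\eta=0$ and $\alpha=1$. In this case $\dim\mathrm{Ext}(\mathbb{C}c_{-\beta},M_{1,\beta})=1$ and every nontrivial extension is equivalent to the one with $L_\lambda c_\eta=kv$, $Y_\lambda c_\eta=M_\lambda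 c_\eta=0$, $\partial c_\eta=\eta c_\eta+kv$ for some $k\neq0$.
   Context: A conformal module over a Lie conformal algebra $\mathcal{R}$ is a $\mathbb{C}[\partial]$-module $V$ with $\mathbb{C}$-linear maps $a\otimes v\mapsto a_\lambda v\in V[\lambda]$ such that $(\partial a)_\lambda v=-\lambda a_\lambda v$, $a_\lambda(\partial v)=(\partial+\lambda)a_\lambda v$, and $a_\lambda(b_\mu v)-b_\mu(a_\lambda v)=[a_\lambda b]_{\lambda+\mu}v$. $TSV(a,b)$ ($a,b\in\mathbb{C}$) is the free $\mathbb{C}[\partial]$-module on $L,Y,M$ with $[L_\lambda L]=(\partial+2\lambda)L$, $[L_\lambda Y]=(\partial+a\lambda+b)Y$, $[L_\lambda M]=(\partial+2(a-1)\lambda+2b)M$, $[Y_\lambda Y]=(\partial+2\lambda)M$, $[Y_\lambda M]=[M_\lambda M]=0$. $TSV(c)$ ($c\in\mathbb{C}$) is the free $\mathbb{C}[\partial]$-module on $L,Y,M$ with $[L_\lambda L]=(\partial+2\lambda)L$, $[L_\lambda Y]=(\partial+\frac32\lambda+c)Y$, $[L_\lambda M]=(\partial+2c)M$, $[Y_\lambda Y]=(\partial+2\lambda)(-\partial-2c)M$, $[Y_\lambda M]=[M_\lambda M]=0$. For $TSV(a,b)$ with $(a,b)\neq(1,0)$ and for $TSV(c)$, $M_{\alpha,\beta}=\mathbb{C}[\partial]v$ ($\alpha\neq0$) has $L_\lambda v=(\partial+\alpha\lambda+\beta)v$, $Y_\lambda v=M_\lambda v=0$. For $TSV(1,0)$,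 $M_{\alpha,\beta,\gamma}=\mathbb{C}[\partial]v$ ($(\alpha,\gamma)\neq(0,0)$) has $L_\lambda v=(\partial+\alpha\lambda+\beta)v$, $Y_\lambda v=\gamma v$, $M_\lambda v=0$. $\mathbb{C}c_\eta$ is the one-dimensional module with $\partial c_\eta=\eta c_\eta$ and all $\lambda$-actions zero. An extension $0\to V\to E\to W\to0$ is an exact sequence of modules; equivalence means a module homomorphism between middle terms compatible with the identities on the end terms; trivial means equivalent to the direct sum extension; $\mathrm{Ext}(W,V)$ is the vector space of equivalence classes of extensions of $W$ by $V$. *)

(* The base field C is modelled by an arbitrary
   numClosedFieldType F (algebraically closed, characteristic 0). *)
From HB Require Import structures.
From mathcomp Require Import all_boot all_order all_algebra.
Set Implicit Arguments. Unset Strict Implicit. Unset Printing Implicit Defensive.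
Import GRing.Theory.
Local Open Scope ring_scope.

(* The three C[d]-basis elements L, Y, M of TSV(a,b) and TSV(c). *)
Inductive gen := gL | gY | gM.

(* A "bracket table" br x y z d l : [x_l y] = sum_z br x y z (d, l) z,
   with d standing for the derivation (polynomial functions of (d,l)). *)
Definition brtable (F : fieldType) := gen -> gen -> gen -> F -> F -> F.

(* TSV(a,b).  Entries with the first argument M or (Y,L) are obtained by
   skew-symmetry [y_l x] = - [x_{-l-d} y]. *)
Definition br_TSVab (F : fieldType) (a b : F) : brtable F :=
  fun x y z d l =>
  match x, y, z with
  | gL, gL, gL => d + 2%:R * l
  | gL, gY, gY => d + a * l + b
  | gL, gM, gM => d + 2%:R * (a - 1) * l + 2%:R * b
  | gY, gL, gY => - (d + a * (- l - d) + b)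
  | gM, gL, gM => - (d + 2%:R * (a - 1) * (- l - d) + 2%:R * b)
  | gY, gY, gM => d + 2%:R * l
  | _, _, _ => 0
  end.

Definition br_TSVc (F : fieldType) (c : F) : brtable F :=
  fun x y z d l =>
  match x, y, z with
  | gL, gL, gL => d + 2%:R * l
  | gL, gY, gY => d + 3%:R / 2%:R * l + c
  | gL, gM, gM => d + 2%:R * c
  | gY, gL, gY => - (d + 3%:R / 2%:R * (- l - d) + c)
  | gM, gL, gM => - (d + 2%:R * c)
  | gY, gY, gM => (d + 2%:R * l) * (- d - 2%:R * c)
  | _, _, _ => 0
  end.

(* Data of a conformal module structure on a vector space V:
   the action of d and the lambda-actions of the generators, where
   cact g l v is the polynomial g_lambda v in V[lambda] evaluated at lambda = l. *)
Record cdata (F : fieldType) (V : lmodType F) := CData {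
  cdd : V -> V;
  cact : gen -> F -> V -> V }.

(* [x_l y]_{l+m} v, using (d a)_nu v = - nu a_nu v. *)
Definition jac_rhs (F : fieldType) (br : brtable F) (V : lmodType F) (D : cdata V)
  (x y : gen) (l m : F) (v : V) : V :=
  br x y gL (- (l + m)) l *: cact D gL (l + m) v
  + br x y gY (- (l + m)) l *: cact D gY (l + m) v
  + br x y gM (- (l + m)) l *: cact D gM (l + m) v.

(* V with data D is a conformal module over the Lie conformal algebra which is
   free over C[d] on L, Y, M with bracket table br.  Identities in V[lambda]
   and V[lambda,mu] are stated pointwise (F is infinite). *)
Definition is_cmod (F : fieldType) (br : brtable F) (V : lmodType F) (D : cdata V) : Prop :=
  [/\ (forall (k : F) (u w : V), cdd D (k *: u + w) = k *: cdd D u + cdd D w),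
      (forall g l (k : F) (u w : V), cact D g l (k *: u + w) = k *: cact D g l u + cact D g l w),
      (forall g (v : V), exists ws : seq V,
          forall l, cact D g l v = \sum_(i < size ws) l ^+ i *: ws`_i),
      (forall g l (v : V), cact D g l (cdd D v) = cdd D (cact D g l v) + l *: cact D g l v) &
      (forall x y l m (v : V),
          cact D x l (cact D y m v) - cact D y m (cact D x l v) = jac_rhs br D x y l m v)].

Definition is_hom (F : fieldType) (V W : lmodType F) (DV : cdata V) (DW : cdata W)
  (f : V -> W) : Prop :=
  [/\ (forall (k : F) (u w : V), f (k *: u + w) = k *: f u + f w),
      (forall v, f (cdd DV v) = cdd DW (f v)) &
      (forall g l v, f (cact DV g l v) = cact DW g l (f v))].

Definition is_ext (F : fieldType) (br : brtable F) (V W E : lmodType F)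
  (DV : cdata V) (DW : cdata W) (DE : cdata E) (i : V -> E) (p : E -> W) : Prop :=
  [/\ is_cmod br DE, is_hom DV DE i /\ is_hom DE DW p,
      injective i,
      (forall w, exists e, p e = w) &
      (forall e, p e = 0 <-> exists v, i v = e)].

Definition ext_equiv (F : fieldType) (V W E E' : lmodType F)
  (DE : cdata E) (i : V -> E) (p : E -> W)
  (DE' : cdata E') (i' : V -> E') (p' : E' -> W) : Prop :=
  exists phi : E -> E', [/\ is_hom DE DE' phi,
                            (forall v, phi (i v) = i' v) &
                            (forall e, p' (phi e) = p e)].

Definition dsum (F : fieldType) (V W : lmodType F) (DV : cdata V) (DW : cdata W)
  : cdata (V * W)%type :=
  CData (fun vw : V * W => (cdd DV vw.1, cdd DW vw.2))
        (fun g l (vw : V * W) => (cact DV g l vw.1, cact DW g l vw.2)).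

Definition ext_trivial (F : fieldType) (V W E : lmodType F)
  (DV : cdata V) (DW : cdata W) (DE : cdata E) (i : V -> E) (p : E -> W) : Prop :=
  ext_equiv (dsum DV DW) (fun v => (v, 0)) (fun vw => vw.2) DE i p.

(* (E', i', p') represents k.[ (E, i, p) ] in Ext(W,V): there is a morphism of
   extensions E -> E' which is multiplication by k on V and the identity on W
   (the pushout of E along k.id_V). *)
Definition ext_scal (F : fieldType) (V W E E' : lmodType F) (k : F)
  (DE : cdata E) (i : V -> E) (p : E -> W)
  (DE' : cdata E') (i' : V -> E') (p' : E' -> W) : Prop :=
  exists psi : E -> E', [/\ is_hom DE DE' psi,
                            (forall v, psi (i v) = i' (k *: v)) &
                            (forall e, p' (psi e) = p e)].

(* dim Ext(W, V) = 1: Ext(W,V) is spanned by a single nonzero class. *)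
Definition Ext_dim1 (F : fieldType) (br : brtable F) (V W : lmodType F)
  (DV : cdata V) (DW : cdata W) : Prop :=
  exists (E0 : lmodType F) (DE0 : cdata E0) (i0 : V -> E0) (p0 : E0 -> W),
    [/\ is_ext br DV DW DE0 i0 p0,
        ~ ext_trivial DV DW DE0 i0 p0 &
        forall (E : lmodType F) (DE : cdata E) (i : V -> E) (p : E -> W),
          is_ext br DV DW DE i p -> exists k : F, ext_scal k DE0 i0 p0 DE i p].

Definition nontriv_ext_exists (F : fieldType) (br : brtable F) (V W : lmodType F)
  (DV : cdata V) (DW : cdata W) : Prop :=
  exists (E : lmodType F) (DE : cdata E) (i : V -> E) (p : E -> W),
    is_ext br DV DW DE i p /\ ~ ext_trivial DV DW DE i p.

(* The rank one module C[d]v, v represented by the polynomial 1: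
   L_l v = (d + alpha l + beta) v, Y_l v = gamma v, M_l v = 0, so that
   x_l (q(d) v) = q(d + l) x_l v. *)
Definition Mabg (F : fieldType) (alpha beta gamma : F) : cdata {poly F} :=
  CData (fun q => 'X * q)
        (fun g l q => match g with
                      | gL => (q \Po ('X + l%:P)) * ('X + (alpha * l + beta)%:P)
                      | gY => (q \Po ('X + l%:P)) * gamma%:P
                      | gM => 0
                      end).

Definition Mab (F : fieldType) (alpha beta : F) : cdata {poly F} := Mabg alpha beta 0.

Definition Ceta (F : fieldType) (eta : F) : cdata F^o :=
  CData (fun x : F^o => eta * x) (fun _ _ _ => 0).

(* The extension E_k = C[d]v (+) C c_eta of C c_eta by the module DV (on C[d]v),
   with L_l c = k v, Y_l c = M_l c = 0, d c = eta c + k v.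
   An element (q, x) stands for q(d) v + x c. *)
Definition Ek (F : fieldType) (DV : cdata {poly F}) (eta k : F)
  : cdata ({poly F} * F^o)%type :=
  CData (fun qx : {poly F} * F^o => (cdd DV qx.1 + (qx.2 * k)%:P, eta * qx.2))
        (fun g l (qx : {poly F} * F^o) =>
           match g with
           | gL => (cact DV gL l qx.1 + (qx.2 * k)%:P, 0)
           | _ => (cact DV g l qx.1, 0)
           end).

Definition Ek_inj (F : fieldType) (q : {poly F}) : ({poly F} * F^o)%type := (q, 0).
Definition Ek_proj (F : fieldType) (qx : ({poly F} * F^o)%type) : F^o := qx.2.

From HB Require Import structures.
From mathcomp Require Import all_boot all_order all_algebra.
From mathcomp Require Import ring.
Set Implicit Arguments. Unset Strict Implicit. Unset Printing Implicit Defensive.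
Import GRing.Theory.
Local Open Scope ring_scope.

(* Given an extension 0 -> M -> E -> C c_eta -> 0, take a preimage c of c_eta.
   Dividing d c - eta c (an element of M) by d - eta, c can be corrected so that
   d c = eta c + ka v for a scalar ka; this ka is an invariant of the extension,
   zero exactly when it splits.  Applying x_l to the relation gives
   (d + l - eta) x_l c = x_l (ka v) in M, which forces Y_l c = M_l c = 0 and
   ka gamma = 0, and, when ka <> 0, alpha = 1, beta + eta = 0 and L_l c = ka v.
   So every extension is the pushout of E_1 (the module Ek with k = 1) along
   ka.id, and E_1 is a module exactly under these conditions: only L acts
   nontrivially on it, and the L-components of the brackets of TSV(a,b) and
   TSV(c) are those of the Virasoro conformal algebra. *)

Section AffineCombination.
Variables (F : fieldType) (V W : lmodType F) (f : V -> W).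
Hypothesis f_lin : forall (k : F) (u w : V), f (k *: u + w) = k *: f u + f w.

Lemma lin0 : f 0 = 0.
Proof. by have := f_lin (-1) 0 0; rewrite scaler0 addr0 scaleN1r addNr. Qed.

Lemma linD u w : f (u + w) = f u + f w.
Proof. by have := f_lin 1 u w; rewrite !scale1r. Qed.

Lemma linZ k u : f (k *: u) = k *: f u.
Proof. by rewrite -[k *: u]addr0 f_lin lin0 addr0. Qed.

Lemma linB u w : f (u - w) = f u - f w.
Proof. by rewrite linD -scaleN1r linZ scaleN1r. Qed.

End AffineCombination.

Lemma mulXaddC_eqC (F : fieldType) (a d : F) (G : {poly F}) :
  ('X + a%:P) * G = d%:P -> G = 0 /\ d = 0.
Proof.
move=> eqG; have d0 : d = 0.
  by have := congr1 (horner^~ (- a)) eqG; rewrite hornerM !hornerE addNr mul0r.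
split=> //; apply/eqP; move: eqG; rewrite d0 => /eqP.
by rewrite mulf_eq0 (negPf (monic_neq0 (monicXaddC a))).
Qed.

Lemma horner_polyC_sum (F : fieldType) (A : {poly {poly F}}) (l : F) :
  A.[l%:P] = \sum_(j < size A) l ^+ j *: A`_j.
Proof.
by rewrite horner_coef; apply: eq_bigr => j _; rewrite -polyC_exp mulrC mul_polyC.
Qed.

Lemma comp_polyXaddC_comp (F : fieldType) (q : {poly F}) (l m : F) :
  (q \Po ('X + m%:P)) \Po ('X + l%:P) = q \Po ('X + (l + m)%:P).
Proof. by rewrite -comp_polyA comp_polyD comp_polyX comp_polyC polyCD addrA. Qed.

Lemma is_hom_eq_src (F : fieldType) (V W : lmodType F) (D1 D2 : cdata V) (D : cdata W)
    (f : V -> W) :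
  (forall v, cdd D1 v = cdd D2 v) -> (forall g l v, cact D1 g l v = cact D2 g l v) ->
  is_hom D2 D f -> is_hom D1 D f.
Proof.
by move=> eq_d eq_act [f_lin f_d f_act]; split=> // [v|g l v]; rewrite ?eq_d ?eq_act.
Qed.

Section Extension.
Variables (F : fieldType) (br : brtable F) (al be ga eta : F).
Variables (E : lmodType F) (DE : cdata E) (i : {poly F} -> E) (p : E -> F^o).
Hypothesis Hext : is_ext br (Mabg al be ga) (Ceta eta) DE i p.

Let DM := Mabg al be ga.

Let cdd_lin k u w : cdd DE (k *: u + w) = k *: cdd DE u + cdd DE w.
Proof. by case: Hext => [[h _ _ _ _] _ _ _ _]; apply: h. Qed.

Let act_lin g l k u w : cact DE g l (k *: u + w) = k *: cact DE g l u + cact DE g l w.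
Proof. by case: Hext => [[_ h _ _ _] _ _ _ _]; apply: h. Qed.

Let act_cdd g l v : cact DE g l (cdd DE v) = cdd DE (cact DE g l v) + l *: cact DE g l v.
Proof. by case: Hext => [[_ _ _ h _] _ _ _ _]; apply: h. Qed.

Let i_lin k u w : i (k *: u + w) = k *: i u + i w.
Proof. by case: Hext => [_ [[h _ _] _] _ _ _]; apply: h. Qed.

Let i_cdd q : i ('X * q) = cdd DE (i q).
Proof. by case: Hext => [_ [[_ h _] _] _ _ _]; apply: h. Qed.

Let i_act g l q : i (cact DM g l q) = cact DE g l (i q).
Proof. by case: Hext => [_ [[_ _ h] _] _ _ _]; apply: h. Qed.

Let p_lin k u w : p (k *: u + w) = k *: p u + p w.
Proof. by case: Hext => [_ [_ [h _ _]] _ _ _]; apply: h. Qed.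

Let p_cdd e : p (cdd DE e) = eta * p e.
Proof. by case: Hext => [_ [_ [_ h _]] _ _ _]; apply: h. Qed.

Let p_act g l e : p (cact DE g l e) = 0.
Proof. by case: Hext => [_ [_ [_ _ h]] _ _ _]; rewrite h. Qed.

Let i_inj : injective i.
Proof. by case: Hext. Qed.

Let p_surj w : exists e, p e = w.
Proof. by case: Hext => [_ _ _ h _]; apply: h. Qed.

Let ker_p e : p e = 0 -> exists q, i q = e.
Proof. by case: Hext => [_ _ _ _ h] /h. Qed.

Let p_i q : p (i q) = 0.
Proof. by case: Hext => [_ _ _ _ h]; apply/h; exists q. Qed.

Lemma ext_lift : exists (c : E) (ka : F), p c = 1 /\ cdd DE c = eta *: c + i ka%:P.
Proof.
have [c0 pc0] := p_surj 1.
have [f if_] : exists f, i f = cdd DE c0 - eta *: c0.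
  by apply: ker_p; rewrite (linB p_lin) (linZ p_lin) p_cdd pc0 subrr.
pose r := f %/ ('X - eta%:P).
have f_eq : f = 'X * r - eta *: r + f.[eta]%:P.
  by rewrite {1}(divp_eq f ('X - eta%:P)) modp_XsubC -/r -mul_polyC; ring.
exists (c0 - i r), f.[eta]; split; first by rewrite (linB p_lin) pc0 p_i subr0.
rewrite (linB cdd_lin) -i_cdd scalerBr.
have -> : cdd DE c0 = i f + eta *: c0 by rewrite if_ subrK.
rewrite {1}f_eq (linD i_lin) (linB i_lin) (linZ i_lin).
by rewrite (AC (5) (((4*2)*3)*(1*5))) /= subrr addr0.
Qed.

Lemma lift_ka_unique (c c' : E) (ka ka' : F) :
  p c = 1 -> cdd DE c = eta *: c + i ka%:P ->
  p c' = 1 -> cdd DE c' = eta *: c' + i ka'%:P -> ka' = ka.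
Proof.
move=> pc dc pc' dc'.
have [u iu] : exists u, i u = c' - c by apply: ker_p; rewrite (linB p_lin) pc pc' subrr.
have c'E : c' = c + i u by rewrite iu addrC subrK.
have /i_inj eq_u : i (ka'%:P + eta *: u) = i (ka%:P + 'X * u).
  apply: (@addrI _ (eta *: c)).
  rewrite (linD i_lin) (linZ i_lin) addrCA -scalerDr -c'E addrC -dc'.
  by rewrite c'E (linD cdd_lin) dc -i_cdd (linD i_lin) addrA.
have := congr1 (horner^~ eta) eq_u.
by rewrite !hornerE => /addIr.
Qed.

Section Lift.
Variables (c : E) (ka : F).
Hypotheses (pc : p c = 1) (dc : cdd DE c = eta *: c + i ka%:P).

Lemma lift_act g l : exists G,
  cact DE g l c = i G /\ ('X + (l - eta)%:P) * G = cact DM g l ka%:P.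
Proof.
have [G iG] := ker_p (p_act g l c).
exists G; split=> //.
have act_dc : eta *: i G + i (cact DM g l ka%:P) = i ('X * G) + l *: i G.
  by rewrite i_act iG -act_lin -dc act_cdd -iG i_cdd.
have -> : ('X + (l - eta)%:P) * G = 'X * G + l *: G - eta *: G.
  by rewrite -!mul_polyC polyCB; ring.
apply: i_inj; rewrite (linB i_lin) (linD i_lin) !(linZ i_lin) -act_dc.
by rewrite addrC addKr.
Qed.

Lemma lift_actY l : cact DE gY l c = 0 /\ ka * ga = 0.
Proof.
have [G [-> eqG]] := lift_act gY l.
move: eqG; rewrite /= comp_polyC -polyCM => /mulXaddC_eqC[-> ->].
by rewrite (lin0 i_lin).
Qed.

Lemma lift_actM l : cact DE gM l c = 0.
Proof.
have [G [-> eqG]] := lift_act gM l.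
by move: eqG; rewrite /= -polyC0 => /mulXaddC_eqC[-> _]; rewrite (lin0 i_lin).
Qed.

Lemma lift_nontrivial_cond : ka != 0 -> [/\ al = 1, be + eta = 0 & ga = 0].
Proof.
move=> ka_neq0.
have root_l l : ka * (eta - l + (al * l + be)) = 0.
  have [G [_ eqG]] := lift_act gL l.
  have := congr1 (horner^~ (eta - l)) eqG. (* kills the left-hand side *)
  rewrite /= comp_polyC !(hornerM, hornerD, hornerX, hornerC) => <-.
  by rewrite addrA subrK subrr mul0r.
have ka_cancel x : ka * x = 0 -> x = 0.
  by move/eqP; rewrite mulf_eq0 (negPf ka_neq0) => /eqP.
have be_eta : be + eta = 0 by rewrite -(ka_cancel _ (root_l 0)); ring.
split=> //; last exact: ka_cancel _ (lift_actY 0).2.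
transitivity (eta - 1 + (al * 1 + be) - (be + eta) + 1); first ring.
by rewrite (ka_cancel _ (root_l 1)) be_eta subrr add0r.
Qed.

Lemma lift_actL l : cact DE gL l c = i ka%:P.
Proof.
have [G [-> eqG]] := lift_act gL l.
have defect0 : ka * ((al - 1) * l + (be + eta)) = 0.
  have [->|/lift_nontrivial_cond[-> -> _]] := eqVneq ka 0; first by rewrite mul0r.
  by rewrite subrr mul0r add0r mulr0.
have : ('X + (l - eta)%:P) * (G - ka%:P) = (ka * ((al - 1) * l + (be + eta)))%:P.
  move: eqG; rewrite /= comp_polyC mulrBr => ->.
  by rewrite !(polyCD, polyCM, polyCB, polyCN); ring.
by rewrite defect0 => /mulXaddC_eqC[/eqP]; rewrite subr_eq0 => /eqP ->.
Qed.

Lemma lift_scal (s k : F) : s * k = ka ->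
  ext_scal s (Ek DM eta k) (@Ek_inj F) (@Ek_proj F) DE i p.
Proof.
move=> skE.
have i_ka x : s *: i (x * k)%:P = x *: i ka%:P.
  by rewrite -!(linZ i_lin) -!mul_polyC -!polyCM -skE mulrCA.
exists (fun qx => s *: i qx.1 + qx.2 *: c); split.
- split.
  + move=> a [u1 u2] [w1 w2] /=.
    rewrite i_lin !scalerDr scalerDl !scalerA mulrC.
    by rewrite (AC (2*2) ((1*3)*(2*4))).
  + move=> [q x] /=.
    rewrite (linD i_lin) i_cdd scalerDr i_ka (linD cdd_lin) !(linZ cdd_lin) dc.
    by rewrite scalerDr scalerA mulrC -addrA (addrC (x *: _)).
  + move=> g l [q x] /=; rewrite (linD (act_lin g l)) !(linZ (act_lin g l)) -i_act.
    case: g; rewrite ?lift_actL ?(lift_actY l).1 ?lift_actM scale0r addr0 ?scaler0 ?addr0 //.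
    by rewrite (linD i_lin) scalerDr i_ka.
- by move=> v /=; rewrite scale0r addr0 (linZ i_lin).
- move=> [q x] /=; rewrite (linD p_lin) !(linZ p_lin) p_i pc scaler0 add0r.
  exact: mulr1.
Qed.

Lemma ext_trivialP : ext_trivial DM (Ceta eta) DE i p <-> ka = 0.
Proof.
split.
  case=> phi [[phi_lin phi_cdd _] _ phi_p].
  (* phi (0, 1) is a lift of c_eta with invariant 0 *)
  apply: (@lift_ka_unique (phi (0, 1)) c 0) => //.
  rewrite polyC0 (lin0 i_lin) addr0 -phi_cdd -[RHS]addr0 -(lin0 phi_lin) -phi_lin.
  by congr phi; congr pair; rewrite /= ?mulr0 ?scaler0 addr0.
move=> ka0; have /lift_scal[psi [psi_hom psi_i psi_p]] : 1 * 0 = ka by rewrite mulr0 ka0.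
exists psi; split=> // [|v]; last by rewrite psi_i scale1r.
apply: is_hom_eq_src psi_hom => [[q x]|[] l [q x]] /=;
  by congr pair; rewrite mulr0 polyC0 addr0.
Qed.

End Lift.

Lemma nontrivial_ext_cond :
  ~ ext_trivial DM (Ceta eta) DE i p -> [/\ al = 1, be + eta = 0 & ga = 0].
Proof.
move=> Hnt; have [c [ka [pc dc]]] := ext_lift.
apply: (lift_nontrivial_cond dc); apply/eqP => /(ext_trivialP pc dc).
exact: Hnt.
Qed.

Lemma nontrivial_ext_equiv_Ek : ~ ext_trivial DM (Ceta eta) DE i p ->
  exists k, k != 0 /\ ext_equiv (Ek DM eta k) (@Ek_inj F) (@Ek_proj F) DE i p.
Proof.
move=> Hnt; have [c [ka [pc dc]]] := ext_lift.
exists ka; split; first by apply/eqP => /(ext_trivialP pc dc).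
have [psi [psi_hom psi_i psi_p]] := lift_scal pc dc (mul1r ka).
by exists psi; split=> // v; rewrite psi_i scale1r.
Qed.

Lemma ext_scal_Ek1 : exists s, ext_scal s (Ek DM eta 1) (@Ek_inj F) (@Ek_proj F) DE i p.
Proof.
have [c [ka [pc dc]]] := ext_lift.
by exists ka; apply: lift_scal pc dc _ _ (mulr1 ka).
Qed.

End Extension.

Definition virasoro_L_component (F : fieldType) (br : brtable F) : Prop :=
  forall x y d l, br x y gL d l = if (x, y) is (gL, gL) then d + 2%:R * l else 0.

Section SplitExtension.
Variables (F : fieldType) (br : brtable F) (be eta k : F).
Hypotheses (br_L : virasoro_L_component br) (be_eta : be + eta = 0).

Let DV := Mabg 1 be 0.
Let DEk := Ek DV eta k.

Let Ek_actY l v : cact DEk gY l v = 0.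
Proof. by rewrite /= polyC0 mulr0. Qed.

Let Ek_actM l v : cact DEk gM l v = 0.
Proof. by []. Qed.

Let Ek_cdd_lin a u w : cdd DEk (a *: u + w) = a *: cdd DEk u + cdd DEk w.
Proof.
case: u w => [u1 u2] [w1 w2]; congr pair => /=; last by rewrite mulrDr mulrCA.
by rewrite -!mul_polyC !(polyCD, polyCM); ring.
Qed.

Let Ek_act_lin g l a u w : cact DEk g l (a *: u + w) = a *: cact DEk g l u + cact DEk g l w.
Proof.
case: g; rewrite ?Ek_actY ?Ek_actM ?scaler0 ?addr0 //.
case: u w => [u1 u2] [w1 w2]; congr pair => /=; last by rewrite scaler0 addr0.
by rewrite comp_polyD comp_polyZ -!mul_polyC !(polyCD, polyCM); ring.
Qed.

Let Ek_act_poly g v : exists ws : seq ({poly F} * F^o),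
  forall l, cact DEk g l v = \sum_(j < size ws) l ^+ j *: ws`_j.
Proof.
case: g; last 2 first.
- by exists [::] => l; rewrite big_ord0 Ek_actY.
- by exists [::] => l; rewrite big_ord0.
case: v => [q x].
(* the outer variable of A stands for l, the inner one for d *)
pose A : {poly {poly F}} :=
  (q^:P \Po ('X%:P + 'X)) * ('X%:P + 'X + be%:P%:P) + (x * k)%:P%:P.
exists [seq (a, 0) | a <- A] => l; rewrite size_map.
rewrite [RHS]surjective_pairing !raddf_sum /=; congr pair.
  under eq_bigr => j _ do rewrite (nth_map 0) //.
  rewrite -horner_polyC_sum /A hornerD hornerM horner_comp !hornerE /=.
  by rewrite polyCD addrA.
by rewrite big1 // => j _; rewrite (nth_map 0) // scaler0.
Qed.

Let Ek_act_cdd g l v : cact DEk g l (cdd DEk v) = cdd DEk (cact DEk g l v) + l *: cact DEk g l v.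
Proof.
case: g; rewrite ?Ek_actY ?Ek_actM ?scaler0 ?addr0 /=; last 2 first.
- by rewrite mulr0 mul0r polyC0 addr0 mulr0.
- by rewrite mulr0 mul0r polyC0 addr0 mulr0.
case: v => [q x] /=; congr pair => /=; last by rewrite mulr0 scaler0 addr0.
have -> : be = - eta by rewrite -(addrK eta be) be_eta sub0r.
rewrite comp_polyD comp_polyM comp_polyX comp_polyC -!mul_polyC.
by rewrite !(polyCD, polyCM, polyCN); ring.
Qed.

Let Ek_act_comm x y l m v : cact DEk x l (cact DEk y m v) - cact DEk y m (cact DEk x l v)
  = jac_rhs br DEk x y l m v.
Proof.
rewrite /jac_rhs !Ek_actY Ek_actM !scaler0 !addr0 br_L.
case: x; case: y; rewrite ?Ek_actY ?Ek_actM ?(lin0 (Ek_act_lin _ _)) ?subrr ?scale0r //.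
case: v => [q z] /=; congr pair => /=; last by rewrite subrr scaler0.
rewrite !(comp_polyD, comp_polyM, comp_polyXaddC_comp, comp_polyX, comp_polyC) -!mul_polyC.
rewrite [m + l]addrC; set Q := q \Po _.
by rewrite !(polyCD, polyCM, polyCN, mul1r, mul0r, polyC0, addr0); ring.
Qed.

Lemma Ek_lift :
  Ek_proj ((0, 1) : {poly F} * F^o) = 1 /\ cdd DEk (0, 1) = eta *: (0, 1) + Ek_inj k%:P.
Proof.
split=> //; congr pair => /=; first by rewrite mulr0 mul1r add0r scaler0 add0r.
by rewrite addr0.
Qed.

Lemma Ek_is_ext : is_ext br DV (Ceta eta) DEk (@Ek_inj F) (@Ek_proj F).
Proof.
split.
- by split; [exact: Ek_cdd_lin | exact: Ek_act_lin | exact: Ek_act_poly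
           | exact: Ek_act_cdd | exact: Ek_act_comm].
- split; split=> //.
  + by move=> a u w; congr pair; rewrite /= ?mul0r ?polyC0 ?addr0 ?scaler0.
  + by move=> v; congr pair; rewrite /= ?mul0r ?polyC0 ?addr0 ?mulr0.
  + by move=> [] l v; congr pair; rewrite /= ?mul0r ?polyC0 ?addr0.
  + by move=> [] l v.
- by move=> u w [].
- by move=> w; exists (0, w).
- by move=> [q x]; split=> [/= ->|[v [_ <-]]] //; exists q.
Qed.

Lemma Ek_nontrivial : k != 0 -> ~ ext_trivial DV (Ceta eta) DEk (@Ek_inj F) (@Ek_proj F).
Proof.
move=> k_neq0; have [pc dc] := Ek_lift.
by move/(ext_trivialP Ek_is_ext pc dc)/eqP; rewrite (negPf k_neq0).
Qed.

End SplitExtension.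

Lemma nontriv_ext_existsP (F : fieldType) (br : brtable F) (al be ga eta : F) :
  virasoro_L_component br ->
  nontriv_ext_exists br (Mabg al be ga) (Ceta eta) <-> [/\ al = 1, be + eta = 0 & ga = 0].
Proof.
move=> br_L; split=> [[E [DE [i [p [Hext Hnt]]]]]|[-> be_eta ->]].
  exact: nontrivial_ext_cond Hext Hnt.
exists _, (Ek (Mabg 1 be 0) eta 1), (@Ek_inj F), (@Ek_proj F).
by split; [exact: Ek_is_ext | exact: Ek_nontrivial (oner_neq0 _)].
Qed.

Lemma Ext_dim1_Mabg1 (F : fieldType) (br : brtable F) (be : F) :
  virasoro_L_component br -> Ext_dim1 br (Mabg 1 be 0) (Ceta (- be)).
Proof.
move=> br_L; have be_eta := subrr be.
exists _, (Ek (Mabg 1 be 0) (- be) 1), (@Ek_inj F), (@Ek_proj F); split.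
- exact: Ek_is_ext.
- exact: Ek_nontrivial (oner_neq0 _).
- by move=> E DE i p /ext_scal_Ek1.
Qed.

Lemma br_TSVab_L (F : fieldType) (a b : F) : virasoro_L_component (br_TSVab a b).
Proof. by case; case. Qed.

Lemma br_TSVc_L (F : fieldType) (c : F) : virasoro_L_component (br_TSVc c).
Proof. by case; case. Qed.

Theorem theorem4p6 (F : numClosedFieldType) :
  (* (1)(i) TSV(a,b), (a,b) <> (1,0) *)
  (forall a b : F, (a, b) <> (1, 0) ->
   forall alpha beta eta : F, alpha != 0 ->
     (nontriv_ext_exists (br_TSVab a b) (Mab alpha beta) (Ceta eta)
        <-> (beta + eta = 0 /\ alpha = 1))
     /\ (beta + eta = 0 -> alpha = 1 ->
         Ext_dim1 (br_TSVab a b) (Mab 1 beta) (Ceta (- beta))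
         /\ (forall (E : lmodType F) (DE : cdata E) (i : {poly F} -> E) (p : E -> F^o),
               is_ext (br_TSVab a b) (Mab alpha beta) (Ceta eta) DE i p ->
               ~ ext_trivial (Mab alpha beta) (Ceta eta) DE i p ->
               exists k : F, k != 0 /\
                 ext_equiv (Ek (Mab alpha beta) eta k) (@Ek_inj F) (@Ek_proj F) DE i p)))
  /\
  (* (1)(ii) TSV(1,0) *)
  (forall alpha beta gamma eta : F, (alpha, gamma) <> (0, 0) ->
     (nontriv_ext_exists (br_TSVab 1 0) (Mabg alpha beta gamma) (Ceta eta)
        <-> (beta + eta = 0 /\ (alpha, gamma) = (1, 0)))
     /\ (beta + eta = 0 -> (alpha, gamma) = (1, 0) ->
         Ext_dim1 (br_TSVab 1 0) (Mabg 1 beta 0) (Ceta (- beta))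
         /\ (forall (E : lmodType F) (DE : cdata E) (i : {poly F} -> E) (p : E -> F^o),
               is_ext (br_TSVab 1 0) (Mabg alpha beta gamma) (Ceta eta) DE i p ->
               ~ ext_trivial (Mabg alpha beta gamma) (Ceta eta) DE i p ->
               exists k : F, k != 0 /\
                 ext_equiv (Ek (Mabg alpha beta gamma) eta k) (@Ek_inj F) (@Ek_proj F)
                   DE i p)))
  /\
  (* (2) TSV(c) *)
  (forall c : F,
   forall alpha beta eta : F, alpha != 0 ->
     (nontriv_ext_exists (br_TSVc c) (Mab alpha beta) (Ceta eta)
        <-> (beta + eta = 0 /\ alpha = 1))
     /\ (beta + eta = 0 -> alpha = 1 ->
         Ext_dim1 (br_TSVc c) (Mab 1 beta) (Ceta (- beta))
         /\ (forall (E : lmodType F) (DE : cdata E) (i : {poly F} -> E) (p : E -> F^o),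
               is_ext (br_TSVc c) (Mab alpha beta) (Ceta eta) DE i p ->
               ~ ext_trivial (Mab alpha beta) (Ceta eta) DE i p ->
               exists k : F, k != 0 /\
                 ext_equiv (Ek (Mab alpha beta) eta k) (@Ek_inj F) (@Ek_proj F) DE i p))).
Proof.
split; [|split].
- move=> a b _ al be eta _; have br_L := br_TSVab_L a b; split.
    by rewrite nontriv_ext_existsP //; split=> [[]|[]].
  move=> _ _; split; first exact: Ext_dim1_Mabg1.
  by move=> E DE i p /nontrivial_ext_equiv_Ek.
- move=> al be ga eta _; have br_L := br_TSVab_L (1 : F) 0; split.
    by rewrite nontriv_ext_existsP //; split=> [[-> ? ->]|[? [-> ->]]].
  move=> _ _; split; first exact: Ext_dim1_Mabg1.
  by move=> E DE i p /nontrivial_ext_equiv_Ek.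
- move=> c al be eta _; have br_L := br_TSVc_L c; split.
    by rewrite nontriv_ext_existsP //; split=> [[]|[]].
  move=> _ _; split; first exact: Ext_dim1_Mabg1.
  by move=> E DE i p /nontrivial_ext_equiv_Ek.
Qed.
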